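(* In the curve-version universal shuffle algebra, for integers $n_1\ge n_2\ge\cdots\ge n_k$, $$z_1^{n_1}*\cdots*z_1^{n_k}=z_1^{n_1}\cdots z_k^{n_k}\sum_{\sigma\text{ admissible}}\ \prod_{i,j:\ \sigma(i)<\sigma(j)}(1-\Delta_{ij})\ +\ \dots,$$ where $\dots$ denotes a combination of monomials in $z_1,\dots,z_k$ of lower lexicographic order than $z_1^{n_1}\cdots z_k^{n_k}$, and a permutation $\sigma\in S(k)$ is called admissible if $i>j$ and $\sigma(i)<\sigma(j)$ imply $n_i=n_j$.
   Context: For $k\in\mathbb{N}$, $\mathbb{F}_k$ is the commutative ring generated over $\mathbb{Z}$ by $\Delta_{ij}$ ($1\le i\ne j\le k$) subject to $\Delta_{ij}=\Delta_{ji}$ and $\Delta_{ij}\cdot P=0$ for every expression $P$ anti-symmetric in $i,j$. $S(k)$ acts on $\mathbb{F}_k$ by permuting indices; $\iota_{\mathrm{first}}:\mathbb{F}_k\to\mathbb{F}_{k+k'}$, $\Delta_{ij}\mapsto\Delta_{ij}$; $\iota_{\mathrm{last}}:\mathbb{F}_{k'}\to\mathbb{F}_{k+k'}$, $\Delta_{ij}\mapsto\Delta_{i+k,j+k}$. $\zeta_{ij}(x)=1+\Delta_{ij}\frac{x}{1-x}$. The shuffle product on $\bigoplus_k\mathbb{F}_k(z_1,\dots,z_k)^{\mathrm{Sym}}$ (functions invariant under simultaneous permutation of variables and indices) is $$R*R'=\mathrm{Sym}\Big[\iota_{\mathrm{first}}(R)(z_1,..,z_k)\,\iota_{\mathrm{last}}(R')(z_{k+1},..,z_{k+k'})\prod_{1\le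 i\le k<j\le k+k'}\zeta_{ij}(z_i/z_j)\Big],$$ $\mathrm{Sym}\,F=\sum_{\sigma\in S(k+k')}(\sigma\circ F)(z_{\sigma(1)},\dots,z_{\sigma(k+k')})$, with $\sigma$ acting on coefficients as well. Elements $z_1^{n_1}*\cdots*z_1^{n_k}$ are Laurent polynomials in $z_1,\dots,z_k$ with coefficients in $\mathbb{F}_k$. *)

From HB Require Import structures.
From mathcomp Require Import all_boot all_order all_algebra all_fingroup.
From mathcomp Require Import mpoly.
Set Implicit Arguments.
Unset Strict Implicit.
Unset Printing Implicit Defensive.
Import Order.TTheory GRing.Theory.
Local Open Scope ring_scope.

(* Formal "expressions" in the Delta's are integer polynomials in       *)
(* variables indexed by ordered pairs (a,b) of 'I_k; a polynomial P is  *)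
(* read as an expression in the Delta_ab by identifying the variable    *)
(* (a,b) with (b,a) (Delta_ab = Delta_ba); diagonal variables (a,a),    *)
(* which do not correspond to any generator, are sent to 0.             *)

Definition npairs (k : nat) := #|{: 'I_k * 'I_k}|.

Definition dexpr (k : nat) := {mpoly int[npairs k]}.

Definition pair_ren (k : nat) (s : 'S_k) (v : 'I_(npairs k)) : 'I_(npairs k) :=
  let a := s (enum_val v).1 in
  let b := s (enum_val v).2 in
  enum_rank (if (a <= b)%N then (a, b) else (b, a)).

Definition dact (k : nat) (s : 'S_k) (P : dexpr k) : dexpr k :=
  mmap (fun c : int => c%:MP) (fun v => 'X_(pair_ren s v)) P.

Definition antisym (k : nat) (i j : 'I_k) (P : dexpr k) : Prop :=
  dact (tperm i j) P = - dact 1 P.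

Definition deval (k : nat) (F : comNzRingType) (D : 'I_k -> 'I_k -> F)
    (P : dexpr k) : F :=
  mmap (fun c : int => c%:~R)
    (fun v => if (enum_val v).1 == (enum_val v).2 then 0
              else D (enum_val v).1 (enum_val v).2) P.

(* (F, D) satisfies the defining relations of F_k:
   Delta_ij = Delta_ji and Delta_ij * P = 0 for P anti-symmetric in i,j *)
Definition Fk_relations (k : nat) (F : comNzRingType) (D : 'I_k -> 'I_k -> F) :
    Prop :=
  (forall i j, D i j = D j i) /\
  (forall (i j : 'I_k), i != j ->
     forall P : dexpr k, antisym i j P -> D i j * deval D P = 0).

(* Rational functions in z_1..z_k with coefficients in F, represented  *)
(* as fractions num/den of polynomials in {mpoly F[k]}.  All            *)
(* denominators occurring below are products of z_i and (z_j - z_i),   *)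
(* which are non-zero-divisors, so equality in the localisation is      *)
(* cross-multiplication.                                                *)

Section Frac.
Variable R : comNzRingType.
Definition frac := (R * R)%type.
Definition fconst (c : R) : frac := (c, 1).
Definition fzero : frac := (0, 1).
Definition fone : frac := (1, 1).
Definition fadd (x y : frac) : frac := (x.1 * y.2 + y.1 * x.2, x.2 * y.2).
Definition fsub (x y : frac) : frac := (x.1 * y.2 - y.1 * x.2, x.2 * y.2).
Definition fmul (x y : frac) : frac := (x.1 * y.1, x.2 * y.2).
Definition fdiv (x y : frac) : frac := (x.1 * y.2, x.2 * y.1).
Definition feq (x y : frac) : Prop := x.1 * y.2 = y.1 * x.2.
End Frac.

Section Shuffle.
Variables (k : nat) (F : comNzRingType).
Local Notation Rz := {mpoly F[k]}.

Definition zvar (i : 'I_k) : frac Rz := ('X_i, 1).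

Definition zpow (i : 'I_k) (e : int) : frac Rz :=
  match e with
  | Posz m => ('X_i ^+ m, 1)
  | Negz m => (1, 'X_i ^+ m.+1)
  end.

Definition zmono (m : 'I_k -> int) : frac Rz :=
  \big[@fmul _/fone _]_(i < k) zpow i (m i).

Definition zeta (d : F) (x : frac Rz) : frac Rz :=
  fadd (fone _) (fmul (fconst d%:MP) (fdiv x (fsub (fone _) x))).

(* z_1^{n_1} * ... * z_1^{n_k}
   = Sym [ z_1^{n_1} ... z_k^{n_k} prod_{i<j} zeta_ij (z_i / z_j) ],
   Sym summing over all sigma in S(k), sigma acting simultaneously on the
   variables and on the indices of the Delta's. *)
Definition shuffle_monomials (D : 'I_k -> 'I_k -> F) (n : 'I_k -> int) :
    frac Rz :=
  \big[@fadd _/fzero _]_(s : 'S_k)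
    fmul (\big[@fmul _/fone _]_(i < k) zpow (s i) (n i))
         (\big[@fmul _/fone _]_(i < k) \big[@fmul _/fone _]_(j < k | (i < j)%N)
             zeta (D (s i) (s j)) (fdiv (zvar (s i)) (zvar (s j)))).

Definition laurent (r : seq ({ffun 'I_k -> int} * F)) : frac Rz :=
  \big[@fadd _/fzero _]_(mc <- r) fmul (fconst (mc.2)%:MP) (zmono mc.1).

End Shuffle.

Definition lexlt (k : nat) (m n : 'I_k -> int) : Prop :=
  exists i : 'I_k, (forall j : 'I_k, (j < i)%N -> m j = n j) /\ m i < n i.

Definition admissible (k : nat) (n : 'I_k -> int) (s : 'S_k) : bool :=
  [forall i : 'I_k, forall j : 'I_k,
     ((j < i)%N && (s i < s j)%N) ==> (n i == n j)].

Definition lead_coef_shuffle (k : nat) (F : comNzRingType)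
    (D : 'I_k -> 'I_k -> F) (n : 'I_k -> int) : F :=
  \sum_(s : 'S_k | admissible n s)
     \prod_(i : 'I_k) \prod_(j : 'I_k | (i < j)%N && (s i < s j)%N) (1 - D i j).

From Pilot Require Import Defs.
From HB Require Import structures.
From mathcomp Require Import all_boot all_order all_algebra all_fingroup.
From mathcomp Require Import mpoly ring zify.
Set Implicit Arguments.
Unset Strict Implicit.
Unset Printing Implicit Defensive.
Import Order.TTheory GRing.Theory Num.Theory.
Local Open Scope ring_scope.

(* Clearing denominators, the symmetrization is N / (z^q V) with
   V = prod_(i<j) (z_j - z_i) and
   N = sum_s sgn(s) z^(p o s^-1) prod_(i<j) (z_(s j) - z_(s i) + Delta_(s i, s j) z_(s i)),
   where p_i = q + n_i >= 0.  Under z_b := z_a (a < b) the terms of s and s (a b) become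
   opposite up to Delta_ab times an expression antisymmetric in a, b, which the relations
   of F_k kill; so N vanishes there and V divides N.  Since N and V are homogeneous, the
   quotient M can be taken homogeneous, so on its support the degree-lexicographic order
   of monomials is the lexicographic one.  Each term of N has leading monomial at most
   (p o s^-1) + lead(V), and p o s^-1 <= p because p is nonincreasing, with equality
   exactly when s^-1 is admissible; as lead(V) has coefficient +-1, comparing the
   coefficients of z^p lead(V) in N = V M gives the coefficient of z^p in M. *)

Section FracCalculus.
Variable R : comNzRingType.
Implicit Types (x y z : Defs.frac R) (a b c : R).

Lemma big_fmulE (I : Type) (r : seq I) (P : pred I) (G : I -> Defs.frac R) :
  \big[@fmul R/fone R]_(i <- r | P i) G i =
  (\prod_(i <- r | P i) (G i).1, \prod_(i <- r | P i) (G i).2).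
Proof.
by elim: r => [|i r IH]; rewrite ?big_nil // !big_cons; case: (P i); rewrite IH.
Qed.

Lemma feq_fmul x x' y y' : feq x x' -> feq y y' -> feq (fmul x y) (fmul x' y').
Proof. by rewrite /feq /= => e1 e2; rewrite mulrACA e1 e2 mulrACA. Qed.

Lemma feq_big_fmul (I : Type) (r : seq I) (P : pred I) (G H : I -> Defs.frac R) :
  (forall i, P i -> feq (G i) (H i)) ->
  feq (\big[@fmul R/fone R]_(i <- r | P i) G i)
      (\big[@fmul R/fone R]_(i <- r | P i) H i).
Proof.
move=> GH; rewrite !big_fmulE /feq /= -!big_split /=.
by apply: eq_bigr => i /GH.
Qed.

Lemma feq_fadd x y a b c : feq x (a, c) -> feq y (b, c) -> feq (fadd x y) (a + b, c).
Proof.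
rewrite /feq /= => ex ey.
transitivity ((x.1 * c) * y.2 + (y.1 * c) * x.2); first by ring.
by rewrite ex ey; ring.
Qed.

Lemma feq_big_fadd (I : Type) (r : seq I) (P : pred I) (G : I -> Defs.frac R)
    (a : I -> R) c :
  (forall i, P i -> feq (G i) (a i, c)) ->
  feq (\big[@fadd R/fzero R]_(i <- r | P i) G i) (\sum_(i <- r | P i) a i, c).
Proof.
move=> Ga; elim/big_rec2: _ => [|i ? ? /Ga]; first by rewrite /feq /= !mul0r.
exact: feq_fadd.
Qed.

Lemma feq_fconst c x a b : feq x (a, b) -> feq (fmul (fconst c) x) (c * a, b).
Proof. by rewrite /feq /= => e; rewrite mul1r -mulrA e mulrA. Qed.

Lemma feq_scale x a b c : feq x (a, b) -> feq (c * a, b * c) x.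
Proof.
rewrite /feq /= => e; transitivity (c * (a * x.2)); first by ring.
by rewrite -e; ring.
Qed.

Lemma feq_sign e x a b : e * e = 1 -> feq x (a, e * b) -> feq x (e * a, b).
Proof.
rewrite /feq /= => ee ex.
rewrite -[LHS]mul1r -ee; transitivity (e * (x.1 * (e * b))); first by ring.
by rewrite ex; ring.
Qed.

Lemma feq_trans y x z : GRing.lreg y.2 -> feq x y -> feq y z -> feq x z.
Proof.
rewrite /feq => regy exy eyz; apply: regy.
transitivity (x.1 * y.2 * z.2); first by ring.
by rewrite exy mulrAC eyz; ring.
Qed.

End FracCalculus.

Section LeadingTerms.
Variables (n : nat) (R : nzRingType).
Implicit Types (p q : {mpoly R[n]}) (m : 'X_{1..n}).

Lemma mlead_eq p m : (mlead p <= m)%O -> p@_m != 0 -> mlead p = m.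
Proof. by move=> le nz; apply/le_anti; rewrite le msupp_le_mlead ?mcoeff_msupp. Qed.

Lemma mlead_prod_leW (I : Type) (r : seq I) (P : pred I) (F : I -> {mpoly R[n]})
    (a : I -> 'X_{1..n}) :
  (forall i, P i -> (mlead (F i) <= a i)%O) ->
  (mlead (\prod_(i <- r | P i) F i) <= (\sum_(i <- r | P i) a i)%MM)%O.
Proof.
move=> Fa; elim/big_rec2: _ => [|i m Q /Fa le_i le_Q]; first by rewrite mlead1.
exact: le_trans (mleadM_le _ _) (lem_add le_i le_Q).
Qed.

Lemma mcoeff_prod_leW (I : Type) (r : seq I) (P : pred I) (F : I -> {mpoly R[n]})
    (a : I -> 'X_{1..n}) :
  (forall i, P i -> (mlead (F i) <= a i)%O) ->
  (\prod_(i <- r | P i) F i)@_((\sum_(i <- r | P i) a i)%MM) =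
  \prod_(i <- r | P i) (F i)@_(a i).
Proof.
move=> Fa; elim: r => [|i r IH]; first by rewrite !big_nil mcoeff1 eqxx.
rewrite !big_cons; case: ifP => // /Fa le_i.
by rewrite mleadcMW // ?IH // mlead_prod_leW.
Qed.

Lemma mcoeffMsign b p m : ((-1) ^+ b * p)@_m = (-1) ^+ b * p@_m.
Proof. by rewrite -(rmorph_sign (@mpolyC n R)) mul_mpolyC mcoeffZ. Qed.

Lemma mpoly_split p m :
  p = (p@_m)%:MP * 'X_[m] + \sum_(m' <- msupp p | m' != m) (p@_m')%:MP * 'X_[m'].
Proof.
rewrite {1}[p]mpolyE (bigID (pred1 m)) /=; congr (_ + _); last first.
  by apply: eq_bigr => m' _; rewrite mul_mpolyC.
rewrite mul_mpolyC; case: (boolP (m \in msupp p)) => mp.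
  by rewrite -big_filter filter_pred1_uniq ?msupp_uniq // big_seq1.
rewrite big1_seq => [|m' /andP[/eqP -> mp']]; last by rewrite mp' in mp.
by move: mp; rewrite mcoeff_msupp negbK => /eqP ->; rewrite scale0r.
Qed.

Lemma ltmc_mnm1 (i j : 'I_n) : (i < j)%N -> (U_(j)%MM < U_(i)%MM)%O.
Proof.
move=> ij; apply/ltmcP; first by rewrite !mdeg1.
exists i => [l li|]; last by rewrite !mnm1E eqxx -val_eqE /= gtn_eqF.
by rewrite !mnm1E -!val_eqE /= !gtn_eqF // (ltn_trans li ij).
Qed.

Lemma mlead_linear2 (i j : 'I_n) (a b : R) : (i < j)%N ->
  (mlead (a *: 'X_i + b *: 'X_j) <= U_(i)%MM)%O /\ (a *: 'X_i + b *: 'X_j)@_U_(i)%MM = a.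
Proof.
move=> ij; have ltji := ltmc_mnm1 ij; split.
  apply: le_trans (mleadD_le _ _) _; rewrite leUx.
  by apply/andP; split; apply: le_trans (mleadZ_le _ _) _; rewrite mleadXm // ltW.
by rewrite mcoeffD !mcoeffZ !mcoeffX eqxx (lt_eqF ltji) mulr1 mulr0 addr0.
Qed.

End LeadingTerms.

Section Homogeneity.
Variables (n : nat) (R : comNzRingType).
Implicit Types (p q : {mpoly R[n]}).

Lemma dhomog_mdegX m : ('X_[m] : {mpoly R[n]}) \is (mdeg m).-homog.
Proof. by apply/dhomogP => m' /mem_msuppXP <-. Qed.

Lemma dhomog_big_prod (I : Type) (r : seq I) (P : pred I) (F : I -> {mpoly R[n]})
    (d : I -> nat) :
  (forall i, P i -> F i \is (d i).-homog) ->
  \prod_(i <- r | P i) F i \is (\sum_(i <- r | P i) d i).-homog.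
Proof.
move=> Fd; elim/big_rec2: _ => [|i e Q /Fd ? ?]; first exact: dhomog1.
exact: dhomogM.
Qed.

Lemma pihomogMl p q d e :
  p \is d.-homog -> pihomog mdeg (d + e) (p * q) = p * pihomog mdeg e q.
Proof.
move=> hp; rewrite {1 2}[q]mpolyE mulr_sumr !linear_sum mulr_sumr /=.
apply: eq_bigr => m _; rewrite -scalerAr !linearZ /= pihomogX.
have hm : p * 'X_[m] \is (d + mdeg m).-homog by apply: dhomogM; rewrite ?dhomog_mdegX.
case: eqP => [<-|ne]; first by rewrite pihomog_dE // scalerAr.
by rewrite (pihomog_ne0 _ hm) ?scaler0 ?mulr0 // eqn_add2l; apply/eqP.
Qed.

End Homogeneity.

Section Vandermonde.
Variables (k : nat) (F : comNzRingType).
Local Notation Rz := {mpoly F[k]}.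
Implicit Types (P Q : Rz) (a b c e : 'I_k) (s : 'S_k).

Definition vdm s : Rz := \prod_(i < k) \prod_(j < k | (i < j)%N) ('X_(s j) - 'X_(s i)).

Lemma vdm_perm s : vdm s = (-1) ^+ s * vdm 1.
Proof.
have vdmE t : vdm t = \det (Vandermonde k (\row_j ('X_(t j) : Rz))).
  by rewrite det_Vandermonde; apply: eq_bigr => i _; apply: eq_bigr => j _; rewrite !mxE.
rewrite !vdmE.
have -> : Vandermonde k (\row_j ('X_(s j) : Rz)) =
          col_perm s (Vandermonde k (\row_j ('X_((1%g : 'S_k) j) : Rz))).
  by apply/matrixP => i j; rewrite !mxE perm1.
by rewrite col_permE det_mulmx det_perm odd_permV mulrC.
Qed.

Lemma mleadc_XsubX c e : (c < e)%N -> mleadc ('X_e - 'X_c : Rz) = -1.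
Proof.
move=> ce; have [le coef] := mlead_linear2 (-1 : F) 1 ce.
have -> : ('X_e - 'X_c : Rz) = -1 *: 'X_c + 1 *: 'X_e by rewrite scaleN1r scale1r addrC.
by rewrite (mlead_eq le) ?coef ?oppr_eq0 ?oner_eq0.
Qed.

Lemma lreg_XsubX c e : c != e -> GRing.lreg ('X_e - 'X_c : Rz).
Proof.
move=> nce; apply: lreg_mleadc; case: (ltngtP c e) => [ce|ec|/val_inj ce].
- by rewrite mleadc_XsubX //; apply: lregN; apply: lreg1.
- by rewrite -opprB mleadN mcoeffN mleadc_XsubX // opprK; apply: lreg1.
- by rewrite ce eqxx in nce.
Qed.

Definition msubst a b : Rz -> Rz :=
  mmap (@mpolyC k F) (fun i => if i == b then 'X_a else 'X_i).

HB.instance Definition _ a b := GRing.RMorphism.on (msubst a b).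

Lemma msubstC a b (x : F) : msubst a b x%:MP = x%:MP.
Proof. exact: mmapC. Qed.

Lemma msubstX a b i : msubst a b 'X_i = if i == b then 'X_a else 'X_i.
Proof. by rewrite /msubst mmapX mmap1U. Qed.

Lemma msubst_dvd a b P : exists Q, P - msubst a b P = ('X_b - 'X_a) * Q.
Proof.
pose dvd P := exists Q, P - msubst a b P = ('X_b - 'X_a) * Q.
have dvdD P1 P2 : dvd P1 -> dvd P2 -> dvd (P1 + P2).
  by move=> [Q1 e1] [Q2 e2]; exists (Q1 + Q2); rewrite rmorphD mulrDr -e1 -e2; ring.
have dvdM P1 P2 : dvd P1 -> dvd P2 -> dvd (P1 * P2).
  move=> [Q1 e1] [Q2 e2]; exists (Q1 * P2 + msubst a b P1 * Q2).
  by rewrite rmorphM mulrDr mulrA -e1 mulrCA -e2; ring.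
have dvdC x : dvd x%:MP by exists 0; rewrite msubstC subrr mulr0.
have dvdX i : dvd 'X_i.
  exists (if i == b then 1 else 0); rewrite msubstX.
  by case: eqP => [->|_]; rewrite ?subrr ?mulr1 ?mulr0.
have dvd1 : dvd 1 by rewrite -mpolyC1; apply: dvdC.
have dvdXn i d : dvd ('X_i ^+ d) by elim: d => // d; rewrite exprS; apply: dvdM.
elim/mpolyind: P => [|x m P _ _ dvdP]; first by rewrite -mpolyC0; apply: dvdC.
apply: dvdD dvdP; rewrite -mul_mpolyC mpolyXE_id; apply: (dvdM); first exact: dvdC.
exact: (big_ind dvd).
Qed.

Lemma lreg_msubst_XsubX a b c e : (a < b)%N -> (c < e)%N -> (c, e) != (a, b) ->
  GRing.lreg (msubst a b ('X_e - 'X_c)).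
Proof.
move=> ab ce ceab; rewrite rmorphB /= !msubstX.
case: (eqVneq c b) => [cb|cb]; case: (eqVneq e b) => [eb|eb]; apply: lreg_XsubX.
- by rewrite cb eb ltnn in ce.
- by apply: contra_ltnN ce => /eqP <-; rewrite cb ltnW.
- by apply: contraNneq ceab => ->; rewrite eb.
- by apply: contra_ltnN ce => /eqP ->.
Qed.

Lemma prod_XsubX_dvd P (L : seq ('I_k * 'I_k)) : uniq L ->
  (forall x, x \in L -> (x.1 < x.2)%N /\ msubst x.1 x.2 P = 0) ->
  exists M, P = (\prod_(x <- L) ('X_x.2 - 'X_x.1)) * M.
Proof.
elim: L => [|[a b] L IH]; first by exists P; rewrite big_nil mul1r.
rewrite cons_uniq => /andP[abL uL] hL.
have hL' x : x \in L -> (x.1 < x.2)%N /\ msubst x.1 x.2 P = 0.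
  by move=> xL; apply: hL; rewrite in_cons xL orbT.
have [ab Pab] := hL _ (mem_head _ _).
have [M eM] := IH uL hL'; rewrite eM in Pab *.
have regL : GRing.lreg (\prod_(x <- L) msubst a b ('X_x.2 - 'X_x.1)).
  rewrite big_seq; apply: big_ind => [||[c e] ceL]; [exact: lreg1 | exact: lregM |].
  by apply: lreg_msubst_XsubX => //; [case: (hL' _ ceL) | apply: contraNneq abL => <-].
have [Q eQ] := msubst_dvd a b M.
exists Q; rewrite big_cons -mulrA mulrCA; congr (_ * _).
have M0 : msubst a b M = 0 by apply: regL; rewrite mulr0 -Pab rmorphM rmorph_prod.
by rewrite -eQ M0 subr0.
Qed.

Lemma vdm_dvd P : (forall a b, (a < b)%N -> msubst a b P = 0) ->
  exists M, P = vdm 1 * M.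
Proof.
move=> P0; set L := [seq x : 'I_k * 'I_k <- index_enum {: 'I_k * 'I_k} | (x.1 < x.2)%N].
have [|x|M ->] := @prod_XsubX_dvd P L; first exact: filter_uniq (index_enum_uniq _).
  by rewrite mem_filter => /andP[ltx _]; split; last exact: P0.
exists M; congr (_ * _); rewrite /vdm pair_big_dep big_filter.
by apply: eq_bigr => x _; rewrite !perm1.
Qed.

End Vandermonde.

Section Relations.
Variables (k : nat) (F : comNzRingType) (D : 'I_k -> 'I_k -> F).
Hypothesis HF : Fk_relations D.

Definition Dval (c e : 'I_k) : F := if c == e then 0 else D c e.

HB.instance Definition _ s := GRing.RMorphism.copy (@dact k s)
  (mmap (@mpolyC _ int) (fun v => 'X_(pair_ren s v))).
HB.instance Definition _ := GRing.RMorphism.copy (deval D)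
  (mmap (intmul 1) (fun v => Dval (enum_val v).1 (enum_val v).2)).

Definition pair_sort (c e : 'I_k) := if (c <= e)%N then (c, e) else (e, c).

Lemma pair_sortC c e : pair_sort c e = pair_sort e c.
Proof. by rewrite /pair_sort; case: (ltngtP c e) => [||/val_inj ->]. Qed.

Lemma pair_sort_perm (t : 'S_k) c e :
  pair_sort (t (pair_sort c e).1) (t (pair_sort c e).2) = pair_sort (t c) (t e).
Proof. by rewrite [pair_sort c e]/pair_sort; case: ifP => //= _; rewrite pair_sortC. Qed.

Lemma Dval_pair_sort c e : Dval (pair_sort c e).1 (pair_sort c e).2 = Dval c e.
Proof.
rewrite /pair_sort; case: leqP => //= _.
by rewrite /Dval eq_sym; case: eqP => // _; rewrite (proj1 HF).
Qed.

Lemma pair_renE (s : 'S_k) v :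
  pair_ren s v = enum_rank (pair_sort (s (enum_val v).1) (s (enum_val v).2)).
Proof. by []. Qed.

Lemma pair_ren_comp (s t : 'S_k) v :
  pair_ren t (pair_ren s v) = pair_ren (s * t)%g v.
Proof. by rewrite !pair_renE enum_rankK pair_sort_perm !permM. Qed.

Lemma dactX (s : 'S_k) v : dact s 'X_v = 'X_(pair_ren s v).
Proof. by rewrite /dact mmapX mmap1U. Qed.

Lemma devalX v : deval D 'X_v = Dval (enum_val v).1 (enum_val v).2.
Proof. by rewrite /deval mmapX mmap1U. Qed.

Variables a b : 'I_k.
Hypothesis neq_ab : a != b.
Local Notation tau := (tperm a b).

Lemma Dval_prod_tperm (I : finType) (P : pred I) (c1 c2 : I -> 'I_k) :
  D a b * (\prod_(i | P i) Dval (c1 i) (c2 i)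
           - \prod_(i | P i) Dval (tau (c1 i)) (tau (c2 i))) = 0.
Proof.
pose w i := enum_rank (c1 i, c2 i); pose Q : dexpr k := \prod_(i | P i) 'X_(w i).
have dactQ s : dact s Q = \prod_(i | P i) 'X_(pair_ren s (w i)).
  by rewrite rmorph_prod; apply: eq_bigr => i _ /=; rewrite dactX.
have dactQ2 s t : dact t (dact s Q) = dact (s * t)%g Q.
  rewrite dactQ rmorph_prod !dactQ; apply: eq_bigr => i _ /=.
  by rewrite dactX pair_ren_comp.
have anti : antisym a b (Q - dact tau Q).
  by rewrite /antisym !rmorphB /= !dactQ2 tperm2 mulg1 opprB.
rewrite -((proj2 HF) a b neq_ab _ anti) rmorphB /= dactQ !rmorph_prod /=.
congr (_ * (_ - _)); apply: eq_bigr => i _.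
  by rewrite devalX /w enum_rankK.
by rewrite devalX pair_renE !enum_rankK Dval_pair_sort.
Qed.

Lemma prod_linear_expand (I : finType) (u v : I -> {mpoly F[k]}) (d : I -> F) :
  \prod_i (u i + (d i)%:MP * v i) =
  \sum_(f : {ffun I -> bool}) (\prod_(i | f i) d i)%:MP * \prod_i (if f i then v i else u i).
Proof.
transitivity (\prod_i \sum_(t : bool) (if t then (d i)%:MP * v i else u i)).
  by apply: eq_bigr => i _; rewrite big_bool addrC.
rewrite bigA_distr_bigA; apply: eq_bigr => f _.
rewrite rmorph_prod [X in _ = X * _]big_mkcond -big_split /=; apply: eq_bigr => i _.
by case: (f i); rewrite ?mul1r.
Qed.

Lemma prod_linear_tperm (I : finType) (P : pred I) (u v : I -> {mpoly F[k]})
    (c1 c2 : I -> 'I_k) :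
  (forall i, P i -> c1 i != c2 i) ->
  (D a b)%:MP * (\prod_(i | P i) (u i + (D (c1 i) (c2 i))%:MP * v i)
                 - \prod_(i | P i) (u i + (D (tau (c1 i)) (tau (c2 i)))%:MP * v i)) = 0.
Proof.
move=> c12.
have toDval (e1 e2 : I -> 'I_k) : (forall i, P i -> e1 i != e2 i) ->
    \prod_(i | P i) (u i + (D (e1 i) (e2 i))%:MP * v i) =
    \prod_i ((if P i then u i else 1) + (Dval (e1 i) (e2 i))%:MP * (if P i then v i else 0)).
  move=> e12; rewrite big_mkcond; apply: eq_bigr => i _.
  by case: ifP => Pi; [rewrite /Dval (negbTE (e12 i Pi)) | rewrite mulr0 addr0].
rewrite !toDval //; last by move=> i Pi; rewrite (inj_eq perm_inj) c12.
rewrite !prod_linear_expand -sumrB mulr_sumr big1 // => f _.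
by rewrite -mulrBl mulrA -rmorphB -rmorphM /= Dval_prod_tperm mul0r.
Qed.

End Relations.

Section NonincreasingPerm.
Local Open Scope order_scope.
Variables (k : nat) (disp : Order.disp_t) (T : orderType disp) (p : 'I_k -> T).
Hypothesis p_noninc : forall i j : 'I_k, (i <= j)%N -> p j <= p i.
Implicit Types (t : 'S_k) (i j : 'I_k).

Lemma ltn_of_lt_noninc i j : p i < p j -> (j < i)%N.
Proof. by move=> lt; rewrite ltnNge; apply/negP => /p_noninc; rewrite leNgt lt. Qed.

Lemma perm_imset_eq t (A : {set 'I_k}) : t @: A \subset A -> t @: A = A.
Proof.
by move=> sub; apply/eqP; rewrite eqEcard sub card_imset ?leqnn //; apply: perm_inj.
Qed.

Lemma perm_le_of_eq_below t i :
  (forall j, (j < i)%N -> p (t j) = p j) -> p (t i) <= p i.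
Proof.
move=> eq_below; rewrite leNgt; apply/negP => lt_ti.
pose A := [set j | p i < p j].
have tA : t @: A = A.
  apply/perm_imset_eq/subsetP => y /imsetP[j]; rewrite !inE => ltj ->.
  by rewrite eq_below // (ltn_of_lt_noninc ltj).
have : t i \in t @: A by rewrite tA inE.
by rewrite mem_imset; [rewrite inE ltxx | apply: perm_inj].
Qed.

Lemma perm_upper_set_stable t v :
  (forall i j, (j < i)%N -> (t i < t j)%N -> p i = p j) ->
  t @: [set j | v < p j] = [set j | v < p j].
Proof.
(* If [x] leaves [A], counting gives some [z] entering [A]; then [x < z], [t z < t x] and
   [p z < p x], against [adm]. *)
move=> adm; set A := [set j | v < p j]; apply: perm_imset_eq.
apply/subsetP => y /imsetP[x xA ->]; apply: contraT => txA.
have [y' yA ytA] : exists2 y, y \in A & y \notin t @: A.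
  apply/subsetPn; apply: contra txA => AtA.
  have eqA : t @: A = A.
    by apply/eqP; rewrite eq_sym eqEcard AtA card_imset ?leqnn //; apply: perm_inj.
  by move: (imset_f t xA); rewrite eqA.
pose z := (t^-1)%g y'; have tz : t z = y' by rewrite permKV.
have zA : z \notin A by apply: contra ytA => zA; rewrite -tz imset_f.
move: xA zA yA txA; rewrite -tz !inE => vx; rewrite -leNgt => zv vtz.
rewrite -leNgt => txv.
have lt_zx := le_lt_trans zv vx.
have := adm z x (ltn_of_lt_noninc lt_zx) (ltn_of_lt_noninc (le_lt_trans txv vtz)).
by move=> eq_zx; rewrite eq_zx ltxx in lt_zx.
Qed.

Lemma perm_fixes_iff t :
  (forall j, p (t j) = p j) <->
  (forall i j, (j < i)%N -> (t i < t j)%N -> p i = p j).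
Proof.
split=> [fix_t i j ji tij|adm j].
  apply/le_anti/andP; split; first exact: p_noninc (ltnW ji).
  by rewrite -(fix_t i) -(fix_t j) p_noninc // ltnW.
have stable v x : (t x \in [set j | v < p j]) = (x \in [set j | v < p j]).
  by rewrite -{1}(perm_upper_set_stable v adm) mem_imset //; apply: perm_inj.
have := stable (p j) j; rewrite !inE ltxx => /negbT; rewrite -leNgt => le_tj.
have := stable (p (t j)) j; rewrite !inE ltxx => /esym/negbT; rewrite -leNgt => le_jt.
by apply/le_anti; rewrite le_tj le_jt.
Qed.

End NonincreasingPerm.

Section ClearingDenominators.
Variables (k : nat) (F : comNzRingType) (q : nat).
Local Notation Rz := {mpoly F[k]}.

Definition Zq : Rz := 'X_[[multinom q | i < k]].

Lemma lreg_Zq : GRing.lreg Zq.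
Proof. by apply: lreg_mleadc; rewrite mleadXm mcoeffX eqxx; apply: lreg1. Qed.

Lemma zpow_feq (i : 'I_k) (m : int) (e : nat) : e%:Z = q%:Z + m ->
  feq (zpow F i m) ('X_i ^+ e, 'X_i ^+ q).
Proof.
case: m => m /= eE; rewrite /feq /= ?mulr1 ?mul1r -exprD; congr (_ ^+ _); lia.
Qed.

Lemma big_zpow_feq (s : 'S_k) (m : 'I_k -> int) (e : 'X_{1..k}) :
  (forall i, (e (s i))%:Z = q%:Z + m i) ->
  feq (\big[@fmul _/fone _]_(i < k) zpow F (s i) (m i)) ('X_[e], Zq).
Proof.
move=> eE; rewrite (_ : ('X_[e], Zq) =
    \big[@fmul _/fone _]_(i < k) ('X_(s i) ^+ e (s i), 'X_(s i) ^+ q)).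
  by apply: feq_big_fmul => i _; apply: zpow_feq.
rewrite big_fmulE /Zq !(mpolyXE _ s); congr pair.
by apply: eq_bigr => i _; rewrite mnmE.
Qed.

Lemma zmono_feq (m : 'I_k -> int) (e : 'X_{1..k}) :
  (forall i, (e i)%:Z = q%:Z + m i) -> feq (zmono F m) ('X_[e], Zq).
Proof.
move=> eE; rewrite /zmono -(eq_bigr _ (fun i _ => congr1 (zpow F ^~ (m i)) (perm1 i))).
by apply: big_zpow_feq => i; rewrite perm1.
Qed.

Definition mshift (m : 'X_{1..k}) : {ffun 'I_k -> int} := [ffun i => (m i)%:Z - q%:Z].

Lemma zmono_mshift m : feq (zmono F (mshift m)) ('X_[m], Zq).
Proof. by apply: zmono_feq => i; rewrite ffunE addrC subrK. Qed.

End ClearingDenominators.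

Section Zfactors.
Variables (k : nat) (F : comNzRingType).
Local Notation Rz := {mpoly F[k]}.
Implicit Types (s : 'S_k) (d : 'I_k -> 'I_k -> F).

Definition zfactor (x : F) (c e : 'I_k) : Rz := 'X_e - 'X_c + x%:MP * 'X_c.

Lemma zeta_feq (x : F) (c e : 'I_k) :
  feq (zeta x (fdiv (zvar F c) (zvar F e))) (zfactor x c e, 'X_e - 'X_c).
Proof. by rewrite /feq /zfactor /=; ring. Qed.

Definition zprod d s : Rz :=
  \prod_(i < k) \prod_(j < k | (i < j)%N) zfactor (d i j) (s i) (s j).

Definition zprod_mnm s : 'X_{1..k} :=
  (\sum_(i < k) \sum_(j < k | (i < j)%N) U_(if (s i < s j)%N then s i else s j))%MM.

Definition zprod_coef d s : F :=
  \prod_(i < k) \prod_(j < k | (i < j)%N) (if (s i < s j)%N then d i j - 1 else 1).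

Lemma zfactor_lead (x : F) (c e : 'I_k) : c != e ->
  (mlead (zfactor x c e) <= U_(if (c < e)%N then c else e)%MM)%O /\
  (zfactor x c e)@_(U_(if (c < e)%N then c else e)%MM) = if (c < e)%N then x - 1 else 1.
Proof.
move=> nce; case: ltngtP => [ce|ec|/val_inj ce]; last by rewrite ce eqxx in nce.
  have -> : zfactor x c e = (x - 1) *: 'X_c + 1 *: 'X_e.
    by rewrite /zfactor scale1r -mul_mpolyC rmorphB rmorph1 /=; ring.
  exact: mlead_linear2.
have -> : zfactor x c e = 1 *: 'X_e + (x - 1) *: 'X_c.
  by rewrite /zfactor scale1r -mul_mpolyC rmorphB rmorph1 /=; ring.
exact: mlead_linear2.
Qed.

Lemma zprod_lead d s :
  (mlead (zprod d s) <= zprod_mnm s)%O /\ (zprod d s)@_(zprod_mnm s) = zprod_coef d s.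
Proof.
have lead (i j : 'I_k) : (i < j)%N -> (mlead (zfactor (d i j) (s i) (s j)) <=
    U_(if (s i < s j)%N then s i else s j)%MM)%O /\
  (zfactor (d i j) (s i) (s j))@_(U_(if (s i < s j)%N then s i else s j)%MM) =
    if (s i < s j)%N then d i j - 1 else 1.
  by move=> ij; apply: zfactor_lead; rewrite (inj_eq perm_inj) neq_ltn ij.
split; first by apply: mlead_prod_leW => i _; apply: mlead_prod_leW => j /lead[].
rewrite mcoeff_prod_leW => [|i _]; last by apply: mlead_prod_leW => j /lead[].
apply: eq_bigr => i _; rewrite mcoeff_prod_leW => [|j /lead[]//].
by apply: eq_bigr => j /lead[].
Qed.

Definition npairs_lt : nat := (\sum_(i < k) \sum_(j < k | (i < j)%N) 1)%N.

Lemma zprod_homog d s : zprod d s \is npairs_lt.-homog.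
Proof.
apply: dhomog_big_prod => i _; apply: dhomog_big_prod => j _.
have hX (c : 'I_k) : ('X_c : Rz) \is 1.-homog by rewrite -(mdeg1 c) dhomog_mdegX.
rewrite /zfactor mul_mpolyC; apply: rpredD; first by apply: rpredB; apply: hX.
by apply: dhomogZ; apply: hX.
Qed.

Definition asc_prod d s : F :=
  \prod_(i < k) \prod_(j < k | (i < j)%N) (if (s i < s j)%N then 1 - d i j else 1).

Local Notation d0 := (fun _ _ : 'I_k => 0 : F).

Lemma zprod_coefE d s : zprod_coef d s = zprod_coef d0 s * asc_prod d s.
Proof.
rewrite -big_split; apply: eq_bigr => i _; rewrite -big_split; apply: eq_bigr => j _ /=.
by case: ifP; rewrite ?mulr1 // sub0r mulN1r opprB.
Qed.

Lemma zprod_coef0_sqr s : zprod_coef d0 s * zprod_coef d0 s = 1.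
Proof.
rewrite -big_split big1 // => i _; rewrite -big_split big1 // => j _ /=.
by case: ifP; rewrite ?sub0r ?mulrNN mulr1.
Qed.

Lemma lreg_zprod_coef0 s : GRing.lreg (zprod_coef d0 s).
Proof. by move=> x y e; rewrite -[x]mul1r -[y]mul1r -(zprod_coef0_sqr s) -!mulrA e. Qed.

Lemma zprod0 s : zprod d0 s = vdm F s.
Proof.
by apply: eq_bigr => i _; apply: eq_bigr => j _; rewrite /zfactor rmorph0 mul0r addr0.
Qed.

Lemma vdm_lead s : mlead (vdm F s) = zprod_mnm s /\ mleadc (vdm F s) = zprod_coef d0 s.
Proof.
have [le coef] := zprod_lead d0 s; rewrite zprod0 in le coef.
have nz : zprod_coef d0 s != 0.
  apply/eqP => z; move: (zprod_coef0_sqr s).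
  by rewrite z mul0r => /eqP; rewrite eq_sym oner_eq0.
by rewrite (mlead_eq le) ?coef.
Qed.

Lemma vdm_lead_perm s :
  zprod_mnm s = zprod_mnm 1 /\ zprod_coef d0 s = (-1) ^+ s * zprod_coef d0 1.
Proof.
have [<- <-] := vdm_lead s; have [<- <-] := vdm_lead 1.
rewrite vdm_perm; case: (odd_perm s); rewrite ?expr0 ?expr1 ?mul1r ?mulN1r //.
by rewrite mleadN mcoeffN.
Qed.

Lemma lreg_vdm s : GRing.lreg (vdm F s).
Proof. by apply: lreg_mleadc; rewrite (vdm_lead s).2; apply: lreg_zprod_coef0. Qed.

End Zfactors.

Section Numerator.
Variables (k : nat) (F : comNzRingType) (D : 'I_k -> 'I_k -> F) (n : 'I_k -> int).
Local Notation Rz := {mpoly F[k]}.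
Local Notation Ds s := (fun i j : 'I_k => D (s i) (s j)).
Implicit Types (s : 'S_k).

Definition shift : nat := (\sum_(i < k) `|n i|)%N.

Definition pexp (i : 'I_k) : nat := absz (shift%:Z + n i).

Lemma pexpE i : (pexp i)%:Z = shift%:Z + n i.
Proof.
have : (`|n i| <= shift)%N by rewrite /shift (bigD1 i) //= leq_addr.
by rewrite /pexp; lia.
Qed.

Definition pmono : 'X_{1..k} := [multinom pexp i | i < k].

Definition pmono_perm (s : 'S_k) : 'X_{1..k} := [multinom pexp ((s^-1)%g j) | j < k].

Definition numer : Rz :=
  \sum_(s : 'S_k) (-1) ^+ s * ('X_[pmono_perm s] * zprod (Ds s) s).

Lemma shuffle_numer : feq (shuffle_monomials D n) (numer, @Zq k F shift * vdm F 1).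
Proof.
apply: feq_big_fadd => s _; apply: feq_sign; first by rewrite -expr2 sqrr_sign.
rewrite mulrCA -vdm_perm.
apply: (feq_fmul (x' := ('X_[pmono_perm s], _)) (y' := (zprod _ s, vdm F s))).
  by apply: big_zpow_feq => i; rewrite mnmE permK pexpE.
rewrite (_ : (_, _) = \big[@fmul _/fone _]_(i < k) \big[@fmul _/fone _]_(j < k | (i < j)%N)
    (zfactor (D (s i) (s j)) (s i) (s j), 'X_(s j) - 'X_(s i))).
  by apply: feq_big_fmul => i _; apply: feq_big_fmul => j _; apply: zeta_feq.
rewrite big_fmulE; congr pair; apply: eq_bigr => i _; by rewrite big_fmulE.
Qed.

Lemma mdeg_pmono_perm s : mdeg (pmono_perm s) = mdeg pmono.
Proof.
rewrite !mdegE (reindex_inj (@perm_inj _ s)); apply: eq_bigr => i _.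
by rewrite !mnmE permK.
Qed.

Lemma numer_homog : numer \is (mdeg pmono + npairs_lt k).-homog.
Proof.
apply: rpred_sum => s _; rewrite rpredMsign; apply: dhomogM; last exact: zprod_homog.
by rewrite -(mdeg_pmono_perm s) dhomog_mdegX.
Qed.

Section Vanishing.
Hypothesis HF : Fk_relations D.
Variables a b : 'I_k.
Hypothesis lt_ab : (a < b)%N.
Local Notation tau := (tperm a b).

Let neq_ab : a != b. Proof. by rewrite neq_ltn lt_ab. Qed.

Lemma msubstX_tperm c : msubst a b ('X_(tau c) : Rz) = msubst a b 'X_c.
Proof. by rewrite !msubstX; case: tpermP => [->|->|_ _]; rewrite ?eqxx ?(negbTE neq_ab). Qed.

Lemma msubst_pmono_perm s :
  msubst a b ('X_[pmono_perm (s * tau)] : Rz) = msubst a b 'X_[pmono_perm s].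
Proof.
rewrite (mpolyXE _ (s * tau)) (mpolyXE _ s) !rmorph_prod; apply: eq_bigr => i _.
by rewrite !rmorphXn /= !mnmE !permK permM msubstX_tperm.
Qed.

Lemma msubst_zfactor x c e : msubst a b (zfactor x c e) =
  msubst a b ('X_e : Rz) - msubst a b 'X_c + x%:MP * msubst a b 'X_c.
Proof. by rewrite rmorphD rmorphB rmorphM /= msubstC. Qed.

Lemma msubst_zprod s : ((s^-1)%g a < (s^-1)%g b)%N ->
  msubst a b (zprod (Ds s) s) =
  msubst a b (zprod (Ds (s * tau)%g) (s * tau)).
Proof.
(* The factors at the pair (s^-1 a, s^-1 b) both become [D a b * X_a]; the others only
   differ by [tau] in the indices of [D]. *)
move=> lt_s; apply/eqP; rewrite -subr_eq0 /zprod !rmorph_prod /=.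
rewrite -!(eq_bigr _ (fun i _ => esym (rmorph_prod _ _ _ _))) !pair_big_dep /=.
pose x0 := ((s^-1)%g a, (s^-1)%g b).
rewrite (bigD1 x0) // [X in _ - X](bigD1 x0) //= !permM !permKV tpermL tpermR.
rewrite !msubst_zfactor !msubstX eqxx (negbTE neq_ab) subrr !add0r (proj1 HF b a).
rewrite -mulrBr mulrAC.
under eq_bigr do rewrite msubst_zfactor.
under [X in _ - X]eq_bigr do rewrite msubst_zfactor !permM !msubstX_tperm.
rewrite (prod_linear_tperm HF neq_ab _ _ (c1 := fun x => s x.1) (c2 := fun x => s x.2)).
  by rewrite mul0r.
by move=> x /andP[lt_x _]; rewrite (inj_eq perm_inj) neq_ltn lt_x.
Qed.

Lemma msubst_numer : msubst a b numer = 0.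
Proof.
rewrite rmorph_sum (bigID (fun s : 'S_k => ((s^-1)%g a < (s^-1)%g b)%N)) /=.
rewrite [X in _ + X](reindex_inj (mulIg tau)) /=.
have lt_tau s : ~~ (((s * tau)^-1)%g a < ((s * tau)^-1)%g b)%N =
                ((s^-1)%g a < (s^-1)%g b)%N.
  rewrite invMg tpermV !permM tpermL tpermR -leqNgt leq_eqVlt.
  by rewrite val_eqE (inj_eq perm_inj) (negbTE neq_ab).
rewrite (eq_bigl _ _ lt_tau) -big_split big1 //= => s lt_s.
rewrite !rmorphM /= !rmorph_sign odd_permM odd_tperm neq_ab signr_addb expr1.
by rewrite msubst_pmono_perm -msubst_zprod // mulrN1 mulNr addrN.
Qed.

End Vanishing.

End Numerator.

Section LeadingCoefficient.
Variables (k : nat) (F : comNzRingType) (D : 'I_k -> 'I_k -> F) (n : 'I_k -> int).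
Hypothesis Hn : forall i j : 'I_k, (i <= j)%N -> n j <= n i.
Local Notation Rz := {mpoly F[k]}.
Local Notation d0 := (fun _ _ : 'I_k => 0 : F).
Local Notation Ds s := (fun i j : 'I_k => D (s i) (s j)).
Local Notation pmono := (pmono n).
Local Notation pmono_perm := (pmono_perm n).
Implicit Types (s : 'S_k).

Lemma eq_pexp i j : (pexp n i == pexp n j) = (n i == n j).
Proof. by rewrite -eqz_nat !pexpE (inj_eq (addrI _)). Qed.

Lemma ltn_pexp i j : (pexp n i < pexp n j)%N = (n i < n j).
Proof. by rewrite -ltz_nat !pexpE ltrD2l. Qed.

Lemma pmono_perm_le s : (pmono_perm s <= pmono)%O.
Proof.
rewrite leNgt; apply/negP => /ltmcP[]; first by rewrite mdeg_pmono_perm.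
move=> i eq_below; rewrite !mnmE ltn_pexp ltNge (perm_le_of_eq_below Hn) // => j.
by move/eq_below/eqP; rewrite !mnmE eq_pexp eq_sym => /eqP.
Qed.

Lemma pmono_perm_eq s : (pmono_perm s == pmono) = admissible n (s^-1)%g.
Proof.
have fixE : (forall j, n ((s^-1)%g j) = n j) <-> pmono_perm s = pmono.
  split=> [fix_s | /mnmP eq_s j]; first by apply/mnmP => j; rewrite !mnmE /pexp fix_s.
  by apply/eqP; move: (eq_s j); rewrite !mnmE => /eqP; rewrite eq_pexp.
apply/eqP/forallP => [/fixE/(perm_fixes_iff Hn) adm i | adm].
  by apply/forallP => j; apply/implyP => /andP[ji sij]; rewrite (adm i j).
apply/fixE/(perm_fixes_iff Hn) => i j ji sij.
by have /forallP/(_ j)/implyP := adm i; rewrite ji sij => /(_ isT)/eqP.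
Qed.

Lemma lead_coef_shuffleE :
  lead_coef_shuffle D n = \sum_(s | pmono_perm s == pmono) asc_prod (Ds s) s.
Proof.
rewrite /lead_coef_shuffle (reindex_inj invg_inj) /=.
apply: eq_big => s; first by rewrite pmono_perm_eq.
move=> _; rewrite /asc_prod.
under [RHS]eq_bigr do rewrite -big_mkcondr.
have h_inj : injective (fun y : 'I_k * 'I_k => (s y.1, s y.2)).
  by move=> [y1 y2] [z1 z2] [/perm_inj -> /perm_inj ->].
rewrite !pair_big_dep /= (reindex_inj h_inj) /=.
by apply: eq_bigl => y; rewrite !permK andbC.
Qed.

Lemma numer_term_lead s :
  (mlead ('X_[pmono_perm s] * zprod (Ds s) s : Rz) <=
     (pmono_perm s + zprod_mnm 1)%MM)%O /\
  ('X_[pmono_perm s] * zprod (Ds s) s : Rz)@_((pmono_perm s + zprod_mnm 1)%MM) =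
    zprod_coef (Ds s) s.
Proof.
have [le coef] := zprod_lead (Ds s) s; rewrite (vdm_lead_perm F s).1 in le coef.
have leX : (mlead ('X_[pmono_perm s] : Rz) <= pmono_perm s)%O by rewrite mleadXm.
split; first exact: le_trans (mleadM_le _ _) (lem_add leX le).
by rewrite mleadcMW // mcoeffX eqxx mul1r.
Qed.

Lemma numer_coef_gt m : ((pmono + zprod_mnm 1)%MM < m)%O -> (numer D n)@_m = 0.
Proof.
move=> lt_m; rewrite raddf_sum big1 // => s _ /=.
rewrite mcoeffMsign mcoeff_gt_mlead ?mulr0 //.
apply: le_lt_trans (numer_term_lead s).1 (le_lt_trans _ lt_m).
by rewrite lemc_add2l pmono_perm_le.
Qed.

Lemma numer_coef_top : (numer D n)@_((pmono + zprod_mnm 1)%MM) =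
  zprod_coef d0 1 * \sum_(s | pmono_perm s == pmono) asc_prod (Ds s) s.
Proof.
rewrite raddf_sum (bigID (fun s => pmono_perm s == pmono)) /= [X in _ + X]big1 ?addr0.
  rewrite mulr_sumr; apply: eq_bigr => s /eqP pm_s.
  rewrite mcoeffMsign -pm_s (numer_term_lead s).2 zprod_coefE (vdm_lead_perm F s).2.
  by rewrite !mulrA -expr2 sqrr_sign mul1r.
move=> s ne_s; rewrite mcoeffMsign mcoeff_gt_mlead ?mulr0 //.
apply: le_lt_trans (numer_term_lead s).1 _.
by rewrite ltmc_add2l lt_neqAle ne_s pmono_perm_le.
Qed.

Section Quotient.
Variable M : Rz.
Hypothesis numerE : numer D n = vdm F 1 * M.

Lemma quotient_mlead : (mlead M <= pmono)%O.
Proof.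
have [lead_V lc_V] := vdm_lead F (1 : 'S_k).
rewrite leNgt; apply/negP => lt_M.
have nzM : M != 0 by apply: contraTneq lt_M => ->; rewrite mlead0 ltNge le0x.
have := numer_coef_gt (m := (zprod_mnm 1 + mlead M)%MM).
rewrite addmC ltmc_add2r => /(_ lt_M); rewrite numerE -lead_V mleadcM lc_V => /eqP.
rewrite mulrI_eq0 ?mleadc_eq0 ?(negbTE nzM) //.
exact: (@lreg_zprod_coef0 k F 1).
Qed.

Lemma quotient_coef :
  M@_pmono = \sum_(s | pmono_perm s == pmono) asc_prod (Ds s) s.
Proof.
have [lead_V lc_V] := vdm_lead F (1 : 'S_k).
apply: (@lreg_zprod_coef0 k F 1).
rewrite -numer_coef_top numerE addmC mleadcMW ?lead_V ?quotient_mlead //.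
by rewrite -lc_V lead_V.
Qed.

End Quotient.

End LeadingCoefficient.

Lemma numer_homog_quotient (k : nat) (F : comNzRingType) (D : 'I_k -> 'I_k -> F)
    (n : 'I_k -> int) :
  Fk_relations D ->
  exists2 M : {mpoly F[k]}, M \is (mdeg (pmono n)).-homog & numer D n = vdm F 1 * M.
Proof.
move=> HF; have [M numerE] := vdm_dvd (@msubst_numer k F D n HF).
have vdm_homog : vdm F (1 : 'S_k) \is (npairs_lt k).-homog.
  by rewrite -zprod0 zprod_homog.
exists (pihomog mdeg (mdeg (pmono n)) M); first exact: pihomogP.
by rewrite -(pihomogMl _ _ vdm_homog) -numerE pihomog_dE // addnC numer_homog.
Qed.

Lemma lexlt_mshift (k : nat) (n : 'I_k -> int) (m : 'X_{1..k}) :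
  mdeg m = mdeg (pmono n) -> (m < pmono n)%O -> lexlt (mshift (shift n) m) n.
Proof.
move=> deg_m /ltmcP[] // i eq_below lt_i; exists i; split=> [j /eq_below|]; rewrite ffunE.
  by move=> ->; rewrite mnmE pexpE addrC addKr.
by move: lt_i; rewrite mnmE -ltz_nat pexpE; lia.
Qed.

Theorem proposition4p6 (k : nat) (n : 'I_k -> int)
    (Hn : forall i j : 'I_k, (i <= j)%N -> n j <= n i)
    (F : comNzRingType) (D : 'I_k -> 'I_k -> F)
    (HF : Fk_relations D) :
  exists r : seq ({ffun 'I_k -> int} * F),
    (forall mc, mc \in r -> lexlt mc.1 n) /\
    feq (shuffle_monomials D n)
        (fadd (fmul (fconst (lead_coef_shuffle D n)%:MP) (zmono F n))
              (laurent r)).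
Proof.
have [M homM numerE] := numer_homog_quotient n HF.
pose L := [seq m <- msupp M | m != pmono n].
exists [seq (mshift (shift n) m, M@_m) | m <- L]; split.
  move=> mc /mapP[m]; rewrite mem_filter => /andP[ne_m Mm] ->.
  apply: lexlt_mshift; first exact: dhomog_mf homM _ Mm.
  by rewrite lt_neqAle ne_m (le_trans (msupp_le_mlead Mm)) ?(quotient_mlead Hn numerE).
apply: feq_trans (shuffle_numer D n) _.
  exact: lregM (@lreg_Zq k F (shift n)) (@lreg_vdm k F 1).
rewrite numerE; apply: feq_scale.
rewrite [X in (X, _)](mpoly_split M (pmono n)) (quotient_coef Hn numerE).
rewrite -lead_coef_shuffleE //.
apply: feq_fadd; first by apply: feq_fconst; apply: zmono_feq => i; rewrite mnmE pexpE.
rewrite -big_filter /laurent big_map; apply: feq_big_fadd => m _.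
exact/feq_fconst/zmono_mshift.
Qed.
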